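(* For real $\alpha\ne0$ and real $\beta$, let $F_{\alpha,\beta}(x)=\bigl(1+\frac{\alpha}{x}\bigr)^{x+\beta}$. Then: (1) For $\alpha>0$: $\bigl(1+\frac{\alpha}{x}\bigr)^{x+\beta}-e^{\alpha}\in\mathcal{C}[(0,\infty)]$ if and only if $\alpha\le2\beta$; and $\bigl(1+\frac{\alpha}{x}\bigr)^{-(x+\beta)}-e^{-\alpha}\in\mathcal{C}[(0,\infty)]$ if and only if $\beta\le0$. (2) For $\alpha<0$: $\bigl(1+\frac{\alpha}{x}\bigr)^{x+\beta}-e^{\alpha}\in\mathcal{C}[(-\alpha,\infty)]$ if and only if $\beta\le\alpha$; and $\frac{1}{F_{\alpha,\beta}(x)}\in\mathcal{C}[(-\alpha,\infty)]$ if and only if $2\beta\ge\alpha$.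
   Context: A function $f$ is completely monotonic on an interval $I$ if it has derivatives of all orders on $I$ and $(-1)^k f^{(k)}(x)\ge0$ for all $x\in I$ and all integers $k\ge0$; the set of such functions is denoted $\mathcal{C}[I]$. *)

From Stdlib Require Import Reals.
From Coquelicot Require Import Coquelicot.
Open Scope R_scope.

Definition completely_monotonic (f : R -> R) (I : R -> Prop) : Prop :=
  forall (k : nat) (x : R), I x ->
    ex_derive_n f k x /\ 0 <= (-1) ^ k * Derive_n f k x.

Definition F (alpha beta x : R) : R := Rpower (1 + alpha / x) (x + beta).

From Stdlib Require Import Reals Lra Lia Factorial.
From Coquelicot Require Import Coquelicot.
Open Scope R_scope.

(* With [logF a b x = (x + b) ln (1 + a / x)] we have [F a b = exp (logF a b)] and
   [logF' = - phi], where [phi x = ln x - ln (x + a) + b / x + (a - b) / (x + a)].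
   Since [exp h] is completely monotonic as soon as [- h'] is, everything reduces to the
   signs of [phi] and of [(-1)^(m+1) phi^(m+1)(x) = m! a B / (x (x + a))^(m+2)], where
   [B = phi_numer x (x + a) b (m + 1)] is expressed through the complete homogeneous sums of
   [x] and [x + a]: [B >= 0] when [a <= 2 b] and [B <= 0] when [b <= a < 0].  Elementary
   bounds on [ln (1 + u)] give the sign of [phi] and [F >= e^a]; the same bounds produce
   points where complete monotonicity fails at order 0 or 1 in the converse directions.
   Finally [1 / F_{a,b}(x) = F_{-a,b-a}(x + a)] turns the statements about [1 / F] into
   statements about [F]. *)

Lemma completely_monotonic_nonneg f I x :
  completely_monotonic f I -> I x -> 0 <= f x.
Proof. intros Hf Hx. pose proof (proj2 (Hf 0%nat x Hx)) as H. simpl in H. lra. Qed.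

Lemma completely_monotonic_Derive_nonpos f I x :
  completely_monotonic f I -> I x -> Derive f x <= 0.
Proof.
  intros Hf Hx. pose proof (proj2 (Hf 1%nat x Hx)) as H.
  change (0 <= (-1) ^ 1 * Derive f x) in H. simpl in H. lra.
Qed.

Lemma completely_monotonic_subset f I J :
  (forall x, J x -> I x) -> completely_monotonic f I -> completely_monotonic f J.
Proof. intros HJI Hf k x Hx. exact (Hf k x (HJI x Hx)). Qed.

Lemma completely_monotonic_comp_trans f I d :
  completely_monotonic f I ->
  completely_monotonic (fun y => f (y + d)) (fun y => I (y + d)).
Proof.
  intros Hf k y Hy. destruct (Hf k (y + d) Hy) as [Hex Hsign]. split.
  - exact (ex_derive_n_comp_trans f k y d Hex).
  - rewrite Derive_n_comp_trans. exact Hsign.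
Qed.

Lemma Derive_n_Derive f k x : Derive_n (Derive f) k x = Derive_n f (S k) x.
Proof. rewrite <- Nat.add_1_r. exact (Derive_n_comp f k 1 x). Qed.

Lemma ex_derive_n_Derive f k x :
  ex_derive f x -> ex_derive_n (Derive f) k x <-> ex_derive_n f (S k) x.
Proof.
  intros Hf. destruct k as [|k]; [simpl; tauto|].
  split; apply ex_derive_ext; intros t; [|symmetry]; apply Derive_n_Derive.
Qed.

Section CompletelyMonotonicOpen.

Variable U : R -> Prop.
Hypothesis U_open : open U.

(* Truncating at order [n] is what makes the product rule provable by induction. *)
Definition cm_upto (n : nat) (f : R -> R) : Prop :=
  forall k x, (k <= n)%nat -> U x ->
    ex_derive_n f k x /\ 0 <= (-1) ^ k * Derive_n f k x.

Lemma completely_monotonic_cm_upto f :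
  completely_monotonic f U <-> forall n, cm_upto n f.
Proof.
  split.
  - intros Hf n k x _ Hx. exact (Hf k x Hx).
  - intros Hf k x Hx. exact (Hf k k x (le_n k) Hx).
Qed.

Lemma cm_upto_le m n f : (m <= n)%nat -> cm_upto n f -> cm_upto m f.
Proof. intros Hmn Hf k x Hk Hx. apply Hf; [lia | exact Hx]. Qed.

Lemma cm_upto_locally n f x :
  cm_upto n f -> U x ->
  locally x (fun y => forall k, (k <= n)%nat -> ex_derive_n f k y).
Proof.
  intros Hf. apply (locally_open U _ U_open).
  intros y Hy k Hk. exact (proj1 (Hf k y Hk Hy)).
Qed.

Lemma cm_upto_ext_in n f g :
  (forall x, U x -> f x = g x) -> cm_upto n f -> cm_upto n g.
Proof.
  intros Hfg Hf k x Hk Hx.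
  assert (Hloc : locally x (fun t => f t = g t)) by exact (locally_open U _ U_open Hfg x Hx).
  destruct (Hf k x Hk Hx) as [Hex Hsign]. split.
  - exact (ex_derive_n_ext_loc f g k x Hloc Hex).
  - rewrite <- (Derive_n_ext_loc f g k x Hloc). exact Hsign.
Qed.

Lemma cm_upto_S n f :
  cm_upto (S n) f <->
  (forall x, U x -> ex_derive f x /\ 0 <= f x) /\ cm_upto n (fun x => - Derive f x).
Proof.
  split.
  - intros Hf.
    assert (Hder : forall x, U x -> ex_derive f x).
    { intros x Hx. exact (proj1 (Hf 1%nat x ltac:(lia) Hx)). }
    split.
    + intros x Hx. split; [exact (Hder x Hx)|].
      pose proof (proj2 (Hf 0%nat x ltac:(lia) Hx)) as H. simpl in H. lra.
    + intros k x Hk Hx. destruct (Hf (S k) x ltac:(lia) Hx) as [Hex Hsign]. split.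
      * apply ex_derive_n_opp. apply ex_derive_n_Derive; [exact (Hder x Hx) | exact Hex].
      * rewrite Derive_n_opp, Derive_n_Derive. simpl pow in Hsign. lra.
  - intros [Hf Hdf] k x Hk Hx. destruct k as [|k].
    + split; [exact I|]. simpl. pose proof (proj2 (Hf x Hx)). lra.
    + destruct (Hdf k x ltac:(lia) Hx) as [Hex Hsign]. split.
      * apply (ex_derive_n_Derive f k x (proj1 (Hf x Hx))).
        apply ex_derive_n_ext with (fun x => - - Derive f x); [intros; ring|].
        apply ex_derive_n_opp. exact Hex.
      * rewrite Derive_n_opp, Derive_n_Derive in Hsign. simpl pow. lra.
Qed.

Lemma cm_upto_plus n f g :
  cm_upto n f -> cm_upto n g -> cm_upto n (fun x => f x + g x).
Proof.
  intros Hf Hg k x Hk Hx.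
  pose proof (cm_upto_locally k f x (cm_upto_le k n f Hk Hf) Hx) as Lf.
  pose proof (cm_upto_locally k g x (cm_upto_le k n g Hk Hg) Hx) as Lg.
  split.
  - exact (ex_derive_n_plus f g k x Lf Lg).
  - rewrite (Derive_n_plus f g k x Lf Lg), Rmult_plus_distr_l.
    apply Rplus_le_le_0_compat; [exact (proj2 (Hf k x Hk Hx)) | exact (proj2 (Hg k x Hk Hx))].
Qed.

Lemma cm_upto_mult n : forall f g,
  cm_upto n f -> cm_upto n g -> cm_upto n (fun x => f x * g x).
Proof.
  induction n as [|n IHn]; intros f g Hf Hg.
  - intros k x Hk Hx. assert (k = 0%nat) as -> by lia. split; [exact I|]. simpl.
    rewrite Rmult_1_l. apply Rmult_le_pos.
    + pose proof (proj2 (Hf 0%nat x Hk Hx)) as H. simpl in H. lra.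
    + pose proof (proj2 (Hg 0%nat x Hk Hx)) as H. simpl in H. lra.
  - apply cm_upto_S in Hf as [Hf Hdf]. apply cm_upto_S in Hg as [Hg Hdg].
    apply cm_upto_S. split.
    + intros x Hx. destruct (Hf x Hx), (Hg x Hx). split.
      * apply ex_derive_mult; assumption.
      * apply Rmult_le_pos; assumption.
    + apply cm_upto_ext_in with (fun x => - Derive f x * g x + f x * - Derive g x).
      * intros x Hx. rewrite Derive_mult by (apply Hf || apply Hg; exact Hx). ring.
      * apply cm_upto_plus; apply IHn; try assumption.
        -- apply cm_upto_le with (S n); [lia|]. apply cm_upto_S. split; assumption.
        -- apply cm_upto_le with (S n); [lia|]. apply cm_upto_S. split; assumption.
Qed.

Lemma completely_monotonic_ext_in f g :
  (forall x, U x -> f x = g x) ->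
  completely_monotonic f U <-> completely_monotonic g U.
Proof.
  intros Hfg. rewrite !completely_monotonic_cm_upto.
  split; intros H n; [apply cm_upto_ext_in with f | apply cm_upto_ext_in with g]; auto.
  intros x Hx. symmetry. auto.
Qed.

Lemma completely_monotonic_exp h psi :
  (forall x, U x -> is_derive h x (- psi x)) ->
  completely_monotonic psi U ->
  completely_monotonic (fun x => exp (h x)) U.
Proof.
  intros Hh Hpsi. apply completely_monotonic_cm_upto.
  rewrite completely_monotonic_cm_upto in Hpsi.
  assert (Hd : forall x, U x -> is_derive (fun y => exp (h y)) x (- (psi x * exp (h x)))).
  { intros x Hx. evar (d : R). replace (- (psi x * exp (h x))) with d.
    - apply (is_derive_comp exp h); [apply is_derive_exp | apply Hh, Hx].
    - unfold d, scal; simpl; unfold mult; simpl. ring. }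
  induction n as [|n IHn].
  - intros k x Hk Hx. assert (k = 0%nat) as -> by lia. split; [exact I|]. simpl.
    rewrite Rmult_1_l. left. apply exp_pos.
  - apply cm_upto_S. split.
    + intros x Hx. split; [eexists; apply Hd, Hx | left; apply exp_pos].
    + apply cm_upto_ext_in with (fun x => psi x * exp (h x)).
      * intros x Hx. erewrite is_derive_unique; [|exact (Hd x Hx)]. ring.
      * apply cm_upto_mult; [apply Hpsi | exact IHn].
Qed.

Lemma completely_monotonic_sub_const f c :
  completely_monotonic f U -> (forall x, U x -> c <= f x) ->
  completely_monotonic (fun x => f x - c) U.
Proof.
  intros Hf Hc k x Hx. destruct k as [|k].
  - split; [exact I|]. simpl. pose proof (Hc x Hx). lra.
  - pose proof (cm_upto_locally (S k) f x (proj1 (completely_monotonic_cm_upto f) Hf _) Hx) as Lf.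
    assert (Lc : locally x (fun y => forall j, (j <= S k)%nat -> ex_derive_n (fun _ => c) j y)).
    { apply filter_forall. intros y j _. apply ex_derive_n_const. }
    split.
    + exact (ex_derive_n_minus f (fun _ => c) (S k) x Lf Lc).
    + rewrite (Derive_n_minus f (fun _ => c) (S k) x Lf Lc), Derive_n_const, Rminus_0_r.
      exact (proj2 (Hf (S k) x Hx)).
Qed.

End CompletelyMonotonicOpen.

Lemma Derive_n_chain (f : R -> R) (g : nat -> R -> R) (D : R -> Prop) :
  open D ->
  (forall y, D y -> f y = g O y) ->
  (forall n y, D y -> is_derive (g n) y (g (S n) y)) ->
  forall n y, D y -> ex_derive_n f n y /\ Derive_n f n y = g n y.
Proof.
  intros HD Hf Hg n. induction n as [|n IHn]; intros y Hy; [split; [exact I | apply Hf, Hy]|].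
  assert (Hloc : locally y (fun t => Derive_n f n t = g n t)).
  { apply (locally_open D _ HD); [intros t Ht; apply IHn, Ht | exact Hy]. }
  split; simpl.
  - apply ex_derive_ext_loc with (g n).
    + eapply filter_imp; [|exact Hloc]. intros t Ht. symmetry. exact Ht.
    + eexists. apply Hg, Hy.
  - rewrite (Derive_ext_loc _ _ y Hloc). apply is_derive_unique, Hg, Hy.
Qed.

Lemma neg1_pow_cases n : (-1) ^ n = 1 \/ (-1) ^ n = -1.
Proof.
  induction n as [|n [IHn | IHn]]; simpl; [left; reflexivity | right | left]; rewrite IHn; ring.
Qed.

(* [hsum p q n = sum_(i < n) p^i q^(n-1-i)], the complete homogeneous sum of degree [n-1]. *)
Fixpoint hsum (p q : R) (n : nat) : R :=
  match n with
  | O => 0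
  | S k => q ^ k + p * hsum p q k
  end.

Lemma hsum_mul_sub p q n : (q - p) * hsum p q n = q ^ n - p ^ n.
Proof.
  induction n as [|n IHn]; simpl; [ring|].
  transitivity ((q - p) * q ^ n + p * ((q - p) * hsum p q n)); [ring|].
  rewrite IHn. ring.
Qed.

Lemma hsum_S_sym p q n : hsum p q (S n) = p ^ n + q * hsum p q n.
Proof.
  induction n as [|n IHn]; [simpl; ring|].
  change (hsum p q (S (S n))) with (q ^ S n + p * hsum p q (S n)).
  rewrite IHn at 1. simpl. ring.
Qed.

Lemma hsum_nonneg p q n : 0 <= p -> 0 <= q -> 0 <= hsum p q n.
Proof.
  intros Hp Hq. induction n as [|n IHn]; simpl; [lra|].
  apply Rplus_le_le_0_compat; [apply pow_le, Hq | apply Rmult_le_pos; assumption].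
Qed.

Lemma hsum_le_mean p q n :
  0 <= p -> 0 <= q -> 2 * p * q * hsum p q n <= INR n * (p ^ S n + q ^ S n).
Proof.
  intros Hp Hq. induction n as [|n IHn]; [simpl; lra|].
  assert (Hsum2 : 2 * hsum p q (S n) = (p + q) * hsum p q n + (p ^ n + q ^ n)).
  { pose proof (hsum_S_sym p q n) as E. simpl hsum in E |- *. lra. }
  assert (Hmono : 0 <= (p ^ S n - q ^ S n) * (p - q)).
  { destruct (Rle_lt_dec p q).
    - assert (p ^ S n <= q ^ S n) by (apply pow_incr; lra). nra.
    - assert (q ^ S n <= p ^ S n) by (apply pow_incr; lra). nra. }
  assert (Hstep : (p + q) * (2 * p * q * hsum p q n) <= (p + q) * (INR n * (p ^ S n + q ^ S n)))
    by (apply Rmult_le_compat_l; lra).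
  assert (0 <= INR n) by apply pos_INR.
  rewrite S_INR.
  replace (2 * p * q * hsum p q (S n)) with (p * q * (2 * hsum p q (S n))) by ring.
  rewrite Hsum2. simpl pow in *. nra.
Qed.

Lemma hsum_ge_pow p q n : 0 <= q <= p -> INR n * q ^ n <= q * hsum p q n.
Proof.
  intros Hqp. induction n as [|n IHn]; [simpl; lra|].
  rewrite S_INR. simpl.
  assert (0 <= INR n * q ^ n) by (apply Rmult_le_pos; [apply pos_INR | apply pow_le; lra]).
  assert (q * (INR n * q ^ n) <= p * (q * hsum p q n)).
  { apply Rmult_le_compat; lra. }
  lra.
Qed.

Definition logF (a b x : R) : R := (x + b) * ln (1 + a / x).

Definition phi (a b x : R) : R := ln x - ln (x + a) + b / x + (a - b) / (x + a).

Definition phi_Derive_n (a b : R) (n : nat) (x : R) : R :=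
  match n with
  | O => phi a b x
  | S m => (-1) ^ m * INR (fact m) *
      (/ x ^ S m - / (x + a) ^ S m - INR (S m) * (b / x ^ S (S m) + (a - b) / (x + a) ^ S (S m)))
  end.

Definition phi_numer (p q b : R) (n : nat) : R :=
  INR n * b * hsum p q (S n) + INR n * p ^ S n - p * q * hsum p q n.

Lemma F_logF a b x : F a b x = exp (logF a b x).
Proof. reflexivity. Qed.

Lemma open_phi_domain a : open (fun x => 0 < x /\ 0 < x + a).
Proof.
  apply open_and; [apply open_gt|].
  intros x Hx. apply (locally_open (fun y => - a < y)); [apply open_gt | intros; lra | lra].
Qed.

Lemma is_derive_logF a b x :
  0 < x -> 0 < x + a -> is_derive (logF a b) x (- phi a b x).
Proof.
  intros Hx Hxa. unfold logF, phi.
  assert (Hu : 0 < 1 + a / x).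
  { replace (1 + a / x) with ((x + a) / x) by (field; lra). apply Rdiv_lt_0_compat; lra. }
  auto_derive; [repeat split; lra|].
  replace (1 + a * / x) with ((x + a) / x) by (field; lra). rewrite ln_div by lra.
  field. lra.
Qed.

Lemma is_derive_phi_Derive_n a b n x :
  0 < x -> 0 < x + a -> is_derive (phi_Derive_n a b n) x (phi_Derive_n a b (S n) x).
Proof.
  intros Hx Hxa. destruct n as [|m]; unfold phi_Derive_n.
  - unfold phi. auto_derive; [repeat split; lra|]. simpl. field. split; lra.
  - pose proof (pow_lt x m Hx). pose proof (pow_lt (x + a) m Hxa).
    auto_derive.
    + repeat split; apply Rgt_not_eq, Rlt_gt; repeat apply Rmult_lt_0_compat; assumption.
    + change (match m with 0%nat => 1 | S _ => INR m + 1 end) with (INR (S m)).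
      rewrite fact_simpl, mult_INR, !S_INR. simpl pow.
      field. repeat split; apply Rgt_not_eq; assumption.
Qed.

Lemma Derive_n_phi a b n x :
  0 < x -> 0 < x + a ->
  ex_derive_n (phi a b) n x /\ Derive_n (phi a b) n x = phi_Derive_n a b n x.
Proof.
  intros Hx Hxa.
  apply (Derive_n_chain (phi a b) (phi_Derive_n a b) _ (open_phi_domain a));
    [| | split; assumption].
  - reflexivity.
  - intros k y [Hy Hya]. apply is_derive_phi_Derive_n; assumption.
Qed.

Lemma phi_numer_spec p q b n :
  (q - p) * phi_numer p q b n =
  INR n * b * q ^ S n + INR n * (q - p - b) * p ^ S n - p * q ^ S n + q * p ^ S n.
Proof.
  unfold phi_numer.
  transitivity (INR n * b * ((q - p) * hsum p q (S n)) + (q - p) * INR n * p ^ S n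
                - p * q * ((q - p) * hsum p q n)); [ring|].
  rewrite !hsum_mul_sub. simpl. ring.
Qed.

Lemma phi_Derive_n_S_sign a b m x :
  0 < x -> 0 < x + a ->
  (-1) ^ S m * phi_Derive_n a b (S m) x =
  INR (fact m) * (a * phi_numer x (x + a) b (S m)) / (x ^ S (S m) * (x + a) ^ S (S m)).
Proof.
  intros Hx Hxa.
  pose proof (phi_numer_spec x (x + a) b (S m)) as Hnum.
  replace (x + a - x) with a in Hnum by ring. rewrite Hnum.
  pose proof (pow_lt x m Hx). pose proof (pow_lt (x + a) m Hxa).
  unfold phi_Derive_n. rewrite !S_INR. simpl pow.
  destruct (neg1_pow_cases m) as [-> | ->];
    field; repeat split; apply Rgt_not_eq; assumption.
Qed.

Lemma phi_numer_nonneg p q b n :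
  0 <= p -> 0 <= q -> q - p <= 2 * b -> 0 <= phi_numer p q b n.
Proof.
  intros Hp Hq Hb. unfold phi_numer.
  pose proof (hsum_le_mean p q n Hp Hq).
  pose proof (hsum_mul_sub p q (S n)) as Hdiff.
  assert (HnS : 0 <= INR n * hsum p q (S n))
    by (apply Rmult_le_pos; [apply pos_INR | apply hsum_nonneg; assumption]).
  assert (INR n * (q - p) * hsum p q (S n) <= INR n * (2 * b) * hsum p q (S n)) by nra.
  assert (INR n * (q - p) * hsum p q (S n) = INR n * (q ^ S n - p ^ S n))
    by (rewrite <- Hdiff; ring).
  lra.
Qed.

Lemma phi_numer_nonpos p q b n :
  0 <= q <= p -> b <= q - p -> phi_numer p q b n <= 0.
Proof.
  intros Hqp Hb. unfold phi_numer.
  pose proof (hsum_ge_pow p q n Hqp).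
  pose proof (hsum_mul_sub p q (S n)) as Hdiff.
  assert (HnS : 0 <= INR n * hsum p q (S n))
    by (apply Rmult_le_pos; [apply pos_INR | apply hsum_nonneg; lra]).
  assert (INR n * b * hsum p q (S n) <= INR n * (q - p) * hsum p q (S n)) by nra.
  assert (INR n * (q - p) * hsum p q (S n) = INR n * (q ^ S n - p ^ S n))
    by (rewrite <- Hdiff; ring).
  assert (0 <= INR n * q ^ n) by (apply Rmult_le_pos; [apply pos_INR | apply pow_le; lra]).
  assert (p * (INR n * q ^ n) <= p * (q * hsum p q n)) by (apply Rmult_le_compat_l; lra).
  simpl pow in *. nra.
Qed.

Lemma completely_monotonic_phi a b (U : R -> Prop) :
  (forall x, U x -> 0 < x /\ 0 < x + a) ->
  (forall x, U x -> 0 <= phi a b x) ->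
  (forall n x, U x -> 0 <= a * phi_numer x (x + a) b (S n)) ->
  completely_monotonic (phi a b) U.
Proof.
  intros Hdom Hphi Hnum k x Hx. destruct (Hdom x Hx) as [Hx0 Hxa].
  destruct (Derive_n_phi a b k x Hx0 Hxa) as [Hex ->]. split; [exact Hex|].
  destruct k as [|m].
  - simpl. rewrite Rmult_1_l. exact (Hphi x Hx).
  - rewrite phi_Derive_n_S_sign by assumption.
    apply Rmult_le_pos; [apply Rmult_le_pos; [apply pos_INR | exact (Hnum m x Hx)]|].
    left. apply Rinv_0_lt_compat, Rmult_lt_0_compat; apply pow_lt; assumption.
Qed.

Lemma completely_monotonic_F_sub a b c (U : R -> Prop) :
  open U ->
  (forall x, U x -> 0 < x /\ 0 < x + a) ->
  (forall x, U x -> 0 <= phi a b x) ->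
  (forall n x, U x -> 0 <= a * phi_numer x (x + a) b (S n)) ->
  (forall x, U x -> c <= F a b x) ->
  completely_monotonic (fun x => F a b x - c) U.
Proof.
  intros HU Hdom Hphi Hnum Hc.
  apply completely_monotonic_sub_const; [exact HU | | exact Hc].
  apply (completely_monotonic_exp U HU (logF a b) (phi a b)).
  - intros x Hx. destruct (Hdom x Hx). apply is_derive_logF; assumption.
  - apply completely_monotonic_phi; assumption.
Qed.

Lemma Derive_F_sub a b c x :
  0 < x -> 0 < x + a ->
  Derive (fun y => F a b y - c) x = - (F a b x * phi a b x).
Proof.
  intros Hx Hxa. apply is_derive_unique.
  evar (d : R). replace (- (F a b x * phi a b x)) with d.
  - apply (is_derive_minus (fun y => exp (logF a b y)) (fun _ => c)); [|apply is_derive_const].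
    apply (is_derive_comp exp (logF a b)); [apply is_derive_exp | apply is_derive_logF; assumption].
  - unfold d, scal, minus, plus, opp, zero; simpl; unfold mult; simpl. rewrite F_logF. ring.
Qed.

Lemma nonneg_of_derive_nonneg (g dg : R -> R) u :
  0 <= u -> g 0 = 0 ->
  (forall t, 0 <= t -> is_derive g t (dg t)) ->
  (forall t, 0 <= t -> 0 <= dg t) ->
  0 <= g u.
Proof.
  intros Hu Hg0 Hg Hdg.
  destruct (MVT_gen g 0 u dg) as [t [Ht Hmvt]]; rewrite ?Rmin_left, ?Rmax_right in * by lra.
  - intros t Ht. apply Hg. lra.
  - intros t Ht. apply continuity_pt_filterlim, (ex_derive_continuous g).
    eexists. apply Hg. lra.
  - rewrite Hg0 in Hmvt. pose proof (Hdg t ltac:(lra)). nra.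
Qed.

Lemma exp_le_exp_compat x y : x <= y -> exp x <= exp y.
Proof. intros [Hlt | ->]; [left; apply exp_increasing, Hlt | right; reflexivity]. Qed.

Lemma ln_1p_le u : -1 < u -> ln (1 + u) <= u.
Proof.
  intros Hu. rewrite <- (ln_exp u) at 2. apply ln_le; [lra | apply exp_ineq1_le].
Qed.

Lemma ln_1p_ge_div u : -1 < u -> u / (1 + u) <= ln (1 + u).
Proof.
  intros Hu.
  assert (Hv : -1 < - u / (1 + u)).
  { apply (Rmult_lt_reg_r (1 + u)); [lra|]. field_simplify; lra. }
  pose proof (ln_1p_le _ Hv) as H.
  replace (1 + - u / (1 + u)) with (/ (1 + u)) in H by (field; lra).
  rewrite ln_Rinv in H by lra. unfold Rdiv in *. lra.
Qed.

(* For [u >= 0], [ln (1 + u)] lies between the harmonic and the arithmetic mean of its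
   elementary bounds [u / (1 + u)] and [u]. *)
Lemma ln_1p_ge_pade u : 0 <= u -> 2 * u / (2 + u) <= ln (1 + u).
Proof.
  intros Hu.
  enough (0 <= ln (1 + u) - 2 * u / (2 + u)) by lra.
  apply (nonneg_of_derive_nonneg (fun t => ln (1 + t) - 2 * t / (2 + t))
    (fun t => t ^ 2 / ((1 + t) * (2 + t) ^ 2))); [exact Hu | | |].
  - rewrite Rplus_0_r, ln_1. field.
  - intros t Ht. auto_derive; [repeat split; lra|]. field. lra.
  - intros t Ht. apply Rmult_le_pos; [apply pow2_ge_0|].
    left. apply Rinv_0_lt_compat, Rmult_lt_0_compat; [lra | apply pow_lt; lra].
Qed.

Lemma ln_1p_le_mean u : 0 <= u -> ln (1 + u) <= (u + u / (1 + u)) / 2.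
Proof.
  intros Hu.
  enough (0 <= (u + u / (1 + u)) / 2 - ln (1 + u)) by lra.
  apply (nonneg_of_derive_nonneg (fun t => (t + t / (1 + t)) / 2 - ln (1 + t))
    (fun t => t ^ 2 / (2 * (1 + t) ^ 2))); [exact Hu | | |].
  - rewrite Rplus_0_r, ln_1. field.
  - intros t Ht. auto_derive; [repeat split; lra|]. field. lra.
  - intros t Ht. apply Rmult_le_pos; [apply pow2_ge_0|].
    left. apply Rinv_0_lt_compat, Rmult_lt_0_compat; [lra | apply pow_lt; lra].
Qed.

Lemma phi_alt a b x :
  0 < x -> 0 < x + a -> phi a b x = b / x + (a - b) / (x + a) - ln (1 + a / x).
Proof.
  intros Hx Hxa. unfold phi.
  replace (1 + a / x) with ((x + a) / x) by (field; lra).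
  rewrite ln_div by lra. ring.
Qed.

Lemma phi_nonneg_of_pos a b x : 0 < a -> a <= 2 * b -> 0 < x -> 0 <= phi a b x.
Proof.
  intros Ha Hb Hx. rewrite phi_alt by lra.
  assert (Hu : 0 <= a / x) by (apply Rlt_le, Rdiv_lt_0_compat; lra).
  pose proof (ln_1p_le_mean _ Hu) as Hln.
  replace ((a / x + a / x / (1 + a / x)) / 2) with (a / (2 * x) + a / (2 * (x + a)))
    in Hln by (field; lra).
  assert (0 <= (b - a / 2) * (a / (x * (x + a))))
    by (apply Rmult_le_pos; [lra | apply Rlt_le, Rdiv_lt_0_compat; nra]).
  replace (b / x + (a - b) / (x + a)) with
    (a / (2 * x) + a / (2 * (x + a)) + (b - a / 2) * (a / (x * (x + a)))) by (field; lra).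
  lra.
Qed.

Lemma phi_neg_of_pos a b x : 0 < a -> 0 < x -> a * b < x * (a - 2 * b) -> phi a b x < 0.
Proof.
  intros Ha Hx Hab. rewrite phi_alt by lra.
  assert (Hu : 0 <= a / x) by (apply Rlt_le, Rdiv_lt_0_compat; lra).
  pose proof (ln_1p_ge_pade _ Hu) as Hln.
  replace (2 * (a / x) / (2 + a / x)) with (2 * a / (2 * x + a)) in Hln by (field; lra).
  assert (0 < a * (x * (a - 2 * b) - a * b) / ((2 * x + a) * (x * (x + a))))
    by (apply Rdiv_lt_0_compat; [nra | apply Rmult_lt_0_compat; nra]).
  replace (b / x + (a - b) / (x + a)) with
    (2 * a / (2 * x + a) - a * (x * (a - 2 * b) - a * b) / ((2 * x + a) * (x * (x + a))))
    by (field; repeat split; lra).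
  lra.
Qed.

Lemma logF_ge_of_pos a b x : 0 < a -> a <= 2 * b -> 0 < x -> a <= logF a b x.
Proof.
  intros Ha Hb Hx. unfold logF.
  assert (Hu : 0 <= a / x) by (apply Rlt_le, Rdiv_lt_0_compat; lra).
  pose proof (ln_1p_ge_pade _ Hu) as Hln.
  assert (Hln0 : 0 <= ln (1 + a / x)) by (rewrite <- ln_1; apply ln_le; lra).
  assert ((x + a / 2) * (2 * (a / x) / (2 + a / x)) <= (x + a / 2) * ln (1 + a / x))
    by (apply Rmult_le_compat_l; lra).
  replace ((x + a / 2) * (2 * (a / x) / (2 + a / x))) with a in * by (field; lra).
  nra.
Qed.

Lemma phi_nonneg_of_neg a b x : a < 0 -> b <= a -> - a < x -> 0 <= phi a b x.
Proof.
  intros Ha Hb Hx. rewrite phi_alt by lra.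
  assert (Hu : -1 < a / x).
  { apply (Rmult_lt_reg_r x); [lra|]. field_simplify; lra. }
  pose proof (ln_1p_le _ Hu) as Hln.
  assert (Hk : 0 < / (x * (x + a))) by (apply Rinv_0_lt_compat; nra).
  assert (0 <= (b - a) * (a * / (x * (x + a)))).
  { assert (a * / (x * (x + a)) < 0) by nra. nra. }
  replace (b / x + (a - b) / (x + a)) with (a / x + (b - a) * (a * / (x * (x + a))))
    by (field; lra).
  lra.
Qed.

Lemma logF_ge_of_neg a b x : a < 0 -> b <= a -> - a < x -> a <= logF a b x.
Proof.
  intros Ha Hb Hx. unfold logF.
  assert (Hu : -1 < a / x).
  { apply (Rmult_lt_reg_r x); [lra|]. field_simplify; lra. }
  pose proof (ln_1p_ge_div _ Hu) as Hln.
  assert (Hln0 : ln (1 + a / x) <= 0).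
  { rewrite <- ln_1. apply ln_le; [lra|].
    assert (a / x < 0) by (apply Rdiv_neg_pos; lra). lra. }
  assert ((x + a) * (a / x / (1 + a / x)) <= (x + a) * ln (1 + a / x))
    by (apply Rmult_le_compat_l; lra).
  replace ((x + a) * (a / x / (1 + a / x))) with a in * by (field; lra).
  nra.
Qed.

Lemma logF_lt_of_neg a b : a < 0 -> a < b -> exists x, - a < x /\ logF a b x < a.
Proof.
  intros Ha Hab.
  (* [x] solves [1 + a / x = exp (- M)], and [M (b - a) > - a] makes [(x + b) M > - a]. *)
  set (M := - a / (b - a) + 1).
  assert (0 < - a / (b - a)) by (apply Rdiv_lt_0_compat; lra).
  assert (HM : 0 < M) by (unfold M; lra).
  assert (He : 0 < exp (- M) < 1).
  { split; [apply exp_pos|]. rewrite <- exp_0. apply exp_increasing. lra. }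
  exists (- a / (1 - exp (- M))). split.
  - apply (Rmult_lt_reg_r (1 - exp (- M))); [lra|]. field_simplify; nra.
  - unfold logF. replace (1 + a / (- a / (1 - exp (- M)))) with (exp (- M)) by (field; lra).
    rewrite ln_exp.
    assert (HMba : M * (b - a) = - a + (b - a)) by (unfold M; field; lra).
    assert (0 < - a / (1 - exp (- M)) + a)
      by (apply (Rmult_lt_reg_r (1 - exp (- M))); [lra|]; field_simplify; nra).
    nra.
Qed.

Lemma completely_monotonic_F_sub_pos a b c :
  0 < a -> c <= exp a ->
  completely_monotonic (fun x => F a b x - c) (fun x => 0 < x) <-> a <= 2 * b.
Proof.
  intros Ha Hc. split; intros H.
  - apply Rnot_lt_le. intros Hb.
    set (x := (Rabs (a * b) + 1) / (a - 2 * b)).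
    assert (Hx : 0 < x) by (apply Rdiv_lt_0_compat; [pose proof (Rabs_pos (a * b)) |]; lra).
    assert (Hxab : a * b < x * (a - 2 * b)).
    { unfold x. replace ((Rabs (a * b) + 1) / (a - 2 * b) * (a - 2 * b)) with (Rabs (a * b) + 1)
        by (field; lra). pose proof (Rle_abs (a * b)). lra. }
    pose proof (completely_monotonic_Derive_nonpos _ _ x H Hx) as Hder.
    rewrite Derive_F_sub in Hder by lra.
    pose proof (phi_neg_of_pos a b x Ha Hx Hxab).
    assert (0 < F a b x) by (rewrite F_logF; apply exp_pos).
    nra.
  - apply completely_monotonic_F_sub; [apply open_gt | intros; lra | | |]; intros.
    + apply phi_nonneg_of_pos; assumption.
    + apply Rmult_le_pos; [lra | apply phi_numer_nonneg; lra].
    + rewrite F_logF. apply Rle_trans with (exp a); [assumption|].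
      apply exp_le_exp_compat, logF_ge_of_pos; assumption.
Qed.

Lemma completely_monotonic_F_sub_neg a b :
  a < 0 ->
  completely_monotonic (fun x => F a b x - exp a) (fun x => - a < x) <-> b <= a.
Proof.
  intros Ha. split; intros H.
  - apply Rnot_lt_le. intros Hab.
    destruct (logF_lt_of_neg a b Ha Hab) as [x [Hx Hlt]].
    pose proof (completely_monotonic_nonneg _ _ x H Hx) as Hnn.
    cbv beta in Hnn. rewrite F_logF in Hnn. pose proof (exp_increasing _ _ Hlt). lra.
  - apply completely_monotonic_F_sub; [apply open_gt | intros; lra | | |]; intros.
    + apply phi_nonneg_of_neg; assumption.
    + assert (phi_numer x (x + a) b (S n) <= 0) by (apply phi_numer_nonpos; lra). nra.
    + rewrite F_logF. apply exp_le_exp_compat, logF_ge_of_neg; assumption.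
Qed.

Lemma inv_F_reflect a b x : 0 < x -> 0 < x + a -> / F a b x = F (- a) (b - a) (x + a).
Proof.
  intros Hx Hxa. unfold F. rewrite <- Rpower_Ropp. unfold Rpower. f_equal.
  assert (Hu : 0 < 1 + a / x).
  { replace (1 + a / x) with ((x + a) / x) by (field; lra). apply Rdiv_lt_0_compat; lra. }
  replace (1 + - a / (x + a)) with (/ (1 + a / x)) by (field; lra).
  rewrite ln_Rinv by exact Hu. ring.
Qed.

Lemma completely_monotonic_inv_F_sub a b c e e' :
  0 <= e -> 0 <= e + a -> e' = e + a ->
  completely_monotonic (fun x => / F a b x - c) (fun x => e < x) <->
  completely_monotonic (fun y => F (- a) (b - a) y - c) (fun y => e' < y).
Proof.
  intros He Hea ->. split; intros H.
  - apply (completely_monotonic_comp_trans _ _ (- a)) in H.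
    apply (completely_monotonic_subset _ _ (fun y => e + a < y)) in H; [|intros; lra].
    rewrite (completely_monotonic_ext_in _ (open_gt _) _ (fun y => F (- a) (b - a) y - c)) in H;
      [exact H|].
    intros y Hy. rewrite inv_F_reflect by lra. replace (y + - a + a) with y by ring. reflexivity.
  - apply (completely_monotonic_comp_trans _ _ a) in H.
    apply (completely_monotonic_subset _ _ (fun x => e < x)) in H; [|intros; lra].
    rewrite (completely_monotonic_ext_in _ (open_gt _) _ (fun x => / F a b x - c)) in H;
      [exact H|].
    intros x Hx. rewrite inv_F_reflect by lra. reflexivity.
Qed.

Theorem theorem1p3 (alpha beta : R) :
  (0 < alpha ->
     (completely_monotonic (fun x => F alpha beta x - exp alpha) (fun x => 0 < x)
        <-> alpha <= 2 * beta)
     /\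
     (completely_monotonic
        (fun x => Rpower (1 + alpha / x) (- (x + beta)) - exp (- alpha))
        (fun x => 0 < x)
        <-> beta <= 0))
  /\
  (alpha < 0 ->
     (completely_monotonic (fun x => F alpha beta x - exp alpha) (fun x => - alpha < x)
        <-> beta <= alpha)
     /\
     (completely_monotonic (fun x => / F alpha beta x) (fun x => - alpha < x)
        <-> alpha <= 2 * beta)).
Proof.
  split; intros Ha; split.
  - exact (completely_monotonic_F_sub_pos alpha beta _ Ha (Rle_refl _)).
  - rewrite (completely_monotonic_ext_in _ (open_gt 0) _
               (fun x => / F alpha beta x - exp (- alpha)))
      by (intros; unfold F; rewrite Rpower_Ropp; reflexivity).
    rewrite (completely_monotonic_inv_F_sub alpha beta _ 0 (- - alpha)) by lra.
    rewrite completely_monotonic_F_sub_neg by lra.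
    split; intros; lra.
  - exact (completely_monotonic_F_sub_neg alpha beta Ha).
  - rewrite (completely_monotonic_ext_in _ (open_gt (- alpha)) _
               (fun x => / F alpha beta x - 0)) by (intros; ring).
    rewrite (completely_monotonic_inv_F_sub alpha beta _ (- alpha) 0) by lra.
    rewrite completely_monotonic_F_sub_pos by (lra || (left; apply exp_pos)).
    split; intros; lra.
Qed.
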